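(* Let $(X,r)$ be a non-degenerate symmetric set with $|X|\ge2$ (not necessarily finite), $(G,r_G)$ its associated symmetric group and $(\mathcal{G},r_{\mathcal{G}})$ its permutation group. (1) $(G,r_G)$ has finite multipermutation level if and only if $(X,r)$ is a multipermutation solution; in that case, writing $m=\mathrm{mpl}(G,r_G)$, $$0\le \mathrm{mpl}(\mathcal{G},r_{\mathcal{G}})=m-1\le \mathrm{mpl}(X,r)\le \mathrm{mpl}(G,r_G)=m<\infty.$$ (2) If moreover $(X,r)$ satisfies condition ( * ), then $\mathrm{mpl}(X,r)=m<\infty$ if and only if $\mathrm{mpl}(G,r_G)=m<\infty$. In particular this holds for all square-free solutions $(X,r)$ of arbitrary cardinality.
   Context: A symmetric set is a pair $(X,r)$, $X$ nonempty, $r:X\times X\to X\times X$ a bijection $r(x,y)=({}^xy,x^y)$ that is non-degenerate (all $y\mapsto{}^xy$, $y\mapsto y^x$ bijective), involutive, and satisfies $r^{12}r^{23}r^{12}=r^{23}r^{12}r^{23}$ on $X^3$. It is square-free if $r(x,x)=(x,x)$ for all $x$. Condition ( * ): for every $x\in X$ there is $a\in X$ with ${}^ax=x$. $G=G(X,r)$ is the group generated by $X$ with relations $xy=zt$ whenever $r(x,y)=(z,t)$; $X$ embeds in $G$. A symmetric group is a pair $(G,\sigma)$, $G$ a group, $\sigma(u,v)=({}^uv,u^v)$ an involutive bijection with ${}^a1=1,{}^1u=u,1^u=1,a^1=a$, ${}^{ab}u={}^a({}^bu)$, $a^{uv}=(a^u)^v$, ${}^a(uv)=({}^au)({}^{a^u}v)$,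 $(ab)^u=(a^{{}^bu})(b^u)$, $uv=({}^uv)(u^v)$; $(G,r_G)$ is $G(X,r)$ with the unique such involutive braiding extending $r$. $\mathcal{L}:G\to\mathrm{Sym}(X)$ extends $x\mapsto(y\mapsto{}^xy)$; $\mathcal{G}=\mathcal{L}(G)$, with symmetric group structure $r_{\mathcal{G}}(\mathcal{L}_a,\mathcal{L}_b)=(\mathcal{L}_{{}^ab},\mathcal{L}_{a^b})$ (well defined since $\ker\mathcal{L}=\{a:{}^au=u\ \forall u\in G\}$). Retraction $\mathrm{Ret}(X,r)=(X/\!\sim,r_{[X]})$, $x\sim y$ iff ${}^xz={}^yz$ for all $z$, $r_{[X]}([x],[y])=([{}^xy],[x^y])$; $\mathrm{mpl}(X,r)=m$ if $m$ is minimal with $\mathrm{Ret}^m(X,r)$ a one-element set (then $(X,r)$ is a multipermutation solution); the mpl of a symmetric group is its mpl as a symmetric set. *)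

From Stdlib Require Import Arith ClassicalEpsilon.

Set Implicit Arguments.

Definition bij {A B : Type} (f : A -> B) : Prop :=
  (forall a b, f a = f b -> a = b) /\ (forall b, exists a, f a = b).

(* r(x,y) = (^x y, x^y), written as a curried map *)
Definition lact {X : Type} (r : X -> X -> X * X) (x y : X) : X := fst (r x y).
Definition ract {X : Type} (r : X -> X -> X * X) (x y : X) : X := snd (r x y).

Definition r12 {X : Type} (r : X -> X -> X * X) (t : X * X * X) : X * X * X :=
  match t with (a, b, c) => let (p, q) := r a b in (p, q, c) end.
Definition r23 {X : Type} (r : X -> X -> X * X) (t : X * X * X) : X * X * X :=
  match t with (a, b, c) => let (p, q) := r b c in (a, p, q) end.

Definition nondegenerate {X : Type} (r : X -> X -> X * X) : Prop :=
  forall x, bij (fun y => lact r x y) /\ bij (fun y => ract r y x).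

Definition involutive {X : Type} (r : X -> X -> X * X) : Prop :=
  forall x y, r (fst (r x y)) (snd (r x y)) = (x, y).

Definition braided {X : Type} (r : X -> X -> X * X) : Prop :=
  forall t : X * X * X, r12 r (r23 r (r12 r t)) = r23 r (r12 r (r23 r t)).

(* non-degenerate symmetric set (involutive implies r is a bijection) *)
Definition symmetric_set (X : Type) (r : X -> X -> X * X) : Prop :=
  (exists x : X, True) /\ nondegenerate r /\ involutive r /\ braided r.

Definition square_free {X : Type} (r : X -> X -> X * X) : Prop :=
  forall x, r x x = (x, x).

Definition cond_star {X : Type} (r : X -> X -> X * X) : Prop :=
  forall x, exists a, lact r a x = x.

Definition is_group {G : Type} (mul : G -> G -> G) (one : G) (inv : G -> G) : Prop :=
  (forall a b c, mul a (mul b c) = mul (mul a b) c) /\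
  (forall a, mul one a = a) /\ (forall a, mul a one = a) /\
  (forall a, mul (inv a) a = one) /\ (forall a, mul a (inv a) = one).

Definition group_hom {G H : Type} (mulG : G -> G -> G) (mulH : H -> H -> H)
  (phi : G -> H) : Prop := forall a b, phi (mulG a b) = mulH (phi a) (phi b).

(* (G, mul, one, inv) together with iota : X -> G is the group
   G(X,r) = < X | xy = zt whenever r(x,y) = (z,t) >, i.e. it satisfies the
   universal property of this presentation. *)
Definition is_structure_group (X : Type) (r : X -> X -> X * X)
  (G : Type) (mul : G -> G -> G) (one : G) (inv : G -> G) (iota : X -> G) : Prop :=
  is_group mul one inv /\
  (forall x y, mul (iota x) (iota y) = mul (iota (fst (r x y))) (iota (snd (r x y)))) /\
  (forall (H : Type) (mulH : H -> H -> H) (oneH : H) (invH : H -> H),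
     is_group mulH oneH invH ->
     forall f : X -> H,
       (forall x y, mulH (f x) (f y) = mulH (f (fst (r x y))) (f (snd (r x y)))) ->
       exists phi : G -> H,
         group_hom mul mulH phi /\ (forall x, phi (iota x) = f x) /\
         (forall psi : G -> H, group_hom mul mulH psi ->
            (forall x, psi (iota x) = f x) -> forall g, psi g = phi g)).

(* (G, sigma) is a symmetric group (braided group with involutive braiding) *)
Definition symmetric_group_braiding {G : Type} (mul : G -> G -> G) (one : G)
  (sigma : G -> G -> G * G) : Prop :=
  let la := fun u v => fst (sigma u v) in
  let ra := fun u v => snd (sigma u v) in
  involutive sigma /\
  (forall a, la a one = one) /\ (forall u, la one u = u) /\
  (forall u, ra one u = one) /\ (forall a, ra a one = a) /\
  (forall a b u, la (mul a b) u = la a (la b u)) /\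
  (forall a u v, ra a (mul u v) = ra (ra a u) v) /\
  (forall a u v, la a (mul u v) = mul (la a u) (la (ra a u) v)) /\
  (forall a b u, ra (mul a b) u = mul (ra a (la b u)) (ra b u)) /\
  (forall u v, mul u v = mul (la u v) (ra u v)).

Definition extends_braiding {X G : Type} (r : X -> X -> X * X) (iota : X -> G)
  (sigma : G -> G -> G * G) : Prop :=
  forall x y, sigma (iota x) (iota y) = (iota (fst (r x y)), iota (snd (r x y))).

(* L : G -> Sym(X) is the group homomorphism extending x |-> (y |-> ^x y)
   (composition of maps X -> X; L g is then automatically a permutation). *)
Definition is_L {X G : Type} (r : X -> X -> X * X) (mul : G -> G -> G) (one : G)
  (iota : X -> G) (L : G -> X -> X) : Prop :=
  (forall x y, L (iota x) y = lact r x y) /\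
  (forall g h y, L (mul g h) y = L g (L h y)) /\
  (forall y, L one y = y).

Record SS := mkSS { car : Type; rmap : car -> car -> car * car }.

Definition sim (A : SS) (x y : car A) : Prop :=
  forall z, fst (rmap A x z) = fst (rmap A y z).

Definition RetCar (A : SS) : Type := { P : car A -> Prop | exists x, P = sim A x }.

Definition cls (A : SS) (x : car A) : RetCar A :=
  exist _ (sim A x) (ex_intro _ x eq_refl).

Definition rep (A : SS) (c : RetCar A) : car A :=
  proj1_sig (constructive_indefinite_description _ (proj2_sig c)).

(* Ret(X,r) = (X/~, r_[X]) with r_[X]([x],[y]) = ([^x y],[x^y]) *)
Definition Ret (A : SS) : SS :=
  @mkSS (RetCar A)
    (fun c d => let a := rep c in let b := rep d in
       (cls A (fst (rmap A a b)), cls A (snd (rmap A a b)))).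

Fixpoint RetN (n : nat) (A : SS) : SS :=
  match n with O => A | Datatypes.S k => Ret (RetN k A) end.

Definition one_element (T : Type) : Prop := exists x : T, forall y : T, y = x.

Definition has_mpl (A : SS) (m : nat) : Prop :=
  one_element (car (RetN m A)) /\ forall k, k < m -> ~ one_element (car (RetN k A)).

Definition finite_mpl (A : SS) : Prop := exists m, has_mpl A m.

(* the permutation group calG = L(G), with r_calG(L_a, L_b) = (L_{^a b}, L_{a^b}) *)
Definition PermCar {X G : Type} (L : G -> X -> X) : Type :=
  { f : X -> X | exists g : G, f = L g }.

Definition prep {X G : Type} (L : G -> X -> X) (c : PermCar L) : G :=
  proj1_sig (constructive_indefinite_description _ (proj2_sig c)).

Definition Lelt {X G : Type} (L : G -> X -> X) (g : G) : PermCar L :=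
  exist _ (L g) (ex_intro _ g eq_refl).

Definition PermSS {X G : Type} (L : G -> X -> X) (sigma : G -> G -> G * G) : SS :=
  @mkSS (PermCar L)
    (fun c d => let a := prep c in let b := prep d in
       (Lelt L (fst (sigma a b)), Lelt L (snd (sigma a b)))).

(* The symmetric group (G, r_G) is a brace: writing lam u v for ^u v,
   the sum u + v = u lam_{u^-1}(v) is an abelian group law respected by each lam_a,
   and u v = u + lam u v.  Let ~_0 be equality on G and let u ~_{k+1} v when
   lam u w ~_k lam v w for all w.  Every ~_k is a congruence for + and lam, and G is
   generated by X under + and negation, so u ~_{k+1} v as soon as ^u x ~_k ^v x for
   all x in X.  Hence Ret^k(G) = G/~_k, Ret^k(X) = X/~_k and Ret^k(calG) = G/~_{k+1},
   and each mpl is the least k for which ~_k is total on the relevant set.  If ~_k is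
   total on X, every x in X satisfies x ~_{k+1} 1, so ~_{k+1} is total on G; under ( * ),
   choosing ^a z = z turns totality of ~_{k+1} on X into ^x z ~_k ^a z = z, so ~_{k+1} is
   total on G at the same level.  Finally X embeds in G, so |X| >= 2 forces mpl >= 1. *)

From Stdlib Require Import Arith ZArith Lia FunctionalExtensionality ProofIrrelevance
  PropExtensionality ClassicalEpsilon Setoid Morphisms.

Definition least (P : nat -> Prop) (m : nat) : Prop := P m /\ forall k, k < m -> ~ P k.

Lemma least_exists (P : nat -> Prop) n : P n -> exists m, least P m.
Proof.
  intro Pn.
  destruct (dec_inh_nat_subset_has_unique_least_element P (fun k => classic (P k))
              (ex_intro _ n Pn)) as [m [[Pm Hmin] _]].
  exists m; split; [exact Pm|]. intros k Hk Pk. specialize (Hmin k Pk). lia.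
Qed.

Lemma least_le {P : nat -> Prop} {m n : nat} : least P m -> P n -> m <= n.
Proof.
  intros [_ Hmin] Pn. destruct (le_lt_dec m n) as [|Hlt]; [assumption|].
  now destruct (Hmin n Hlt).
Qed.

Lemma least_iff (P Q : nat -> Prop) m : (forall k, P k <-> Q k) -> least P m <-> least Q m.
Proof. intro PQ. unfold least. setoid_rewrite PQ. reflexivity. Qed.

Lemma least_succ (P : nat -> Prop) m : ~ P 0 ->
  least P (S m) <-> least (fun k => P (S k)) m.
Proof.
  intro nP0. split; intros [Pm Hmin]; split; auto.
  - intros k Hk. apply Hmin. lia.
  - intros [|k] Hk; [exact nP0|]. apply Hmin. lia.
Qed.

Lemma sig_ext {A : Type} {P : A -> Prop} (a b : sig P) : proj1_sig a = proj1_sig b -> a = b.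
Proof. destruct a, b. apply ProofIrrelevanceTheory.subset_eq_compat. Qed.

Lemma cls_eq_iff (A : SS) (x y : car A) : cls A x = cls A y <-> sim A x y.
Proof.
  split.
  - intro Hxy. apply (f_equal (@proj1_sig _ _)) in Hxy. simpl in Hxy.
    rewrite Hxy. intro z. reflexivity.
  - intro Hxy. apply sig_ext; simpl. extensionality w. apply propositional_extensionality.
    split; intros Hw z; rewrite <- Hw; [symmetry|]; apply Hxy.
Qed.

Lemma cls_surj (A : SS) (c : RetCar A) : exists x, cls A x = c.
Proof. destruct c as [P [x ->]]. now exists x. Qed.

Lemma sim_rep (A : SS) (x : car A) : sim A x (rep (cls A x)).
Proof.
  unfold rep. destruct (constructive_indefinite_description _ _) as [y Hy]; simpl in *.
  rewrite Hy. intro z. reflexivity.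
Qed.

Section Retraction.
Variable A : SS.

Variable E : nat -> car A -> car A -> Prop.
Hypothesis E_equiv : forall k, Equivalence (E k).
Hypothesis E_0 : forall x y, E 0 x y <-> x = y.
Hypothesis E_S : forall k x y,
  E (S k) x y <-> forall z, E k (fst (rmap A x z)) (fst (rmap A y z)).
Hypothesis E_compat : forall k x x' z z', E k x x' -> E k z z' ->
  E k (fst (rmap A x z)) (fst (rmap A x' z')).

Lemma RetN_quotient k : exists q : car A -> car (RetN k A),
  (forall c, exists x, q x = c) /\ (forall x y, q x = q y <-> E k x y) /\
  (forall x z, fst (rmap (RetN k A) (q x) (q z)) = q (fst (rmap A x z))).
Proof.
  induction k as [|k [q [q_surj [q_eq q_lact]]]].
  - exists (fun x => x). split; [|split].
    + intro c. now exists c.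
    + intros x y. now rewrite E_0.
    + reflexivity.
  - set (B := RetN k A).
    assert (cls_q_eq : forall x y, cls B (q x) = cls B (q y) <-> E (S k) x y).
    { intros x y. rewrite cls_eq_iff, E_S. unfold sim. split.
      - intros H z. apply q_eq. rewrite <- !q_lact. apply H.
      - intros H w. destruct (q_surj w) as [z <-]. rewrite !q_lact. apply q_eq, H. }
    assert (E_rep : forall x, exists x1, rep (cls B (q x)) = q x1 /\ E (S k) x x1).
    { intro x. destruct (q_surj (rep (cls B (q x)))) as [x1 Hx1]. exists x1.
      split; [easy|]. apply cls_q_eq, cls_eq_iff. rewrite Hx1. apply sim_rep. }
    exists (fun x => cls B (q x)). split; [|split].
    + intro c. destruct (cls_surj B c) as [b <-]. destruct (q_surj b) as [x <-]. now exists x.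
    + exact cls_q_eq.
    + intros x z. simpl. fold B.
      destruct (E_rep x) as [x1 [-> Hx1]], (E_rep z) as [z1 [-> Hz1]].
      rewrite q_lact. apply cls_q_eq. symmetry. now apply E_compat.
Qed.

Lemma one_element_RetN_iff (x0 : car A) k :
  one_element (car (RetN k A)) <-> forall x y, E k x y.
Proof.
  destruct (RetN_quotient k) as [q [q_surj [q_eq _]]]. split.
  - intros [c Hc] x y. apply q_eq. now rewrite (Hc (q x)), (Hc (q y)).
  - intro Hall. exists (q x0). intro c. destruct (q_surj c) as [x <-]. apply q_eq, Hall.
Qed.

Lemma has_mpl_iff (x0 : car A) m : has_mpl A m <-> least (fun k => forall x y, E k x y) m.
Proof.
  apply (least_iff (fun k => one_element (car (RetN k A)))).
  intro k. apply (one_element_RetN_iff x0).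
Qed.
End Retraction.

Definition Bij (T : Type) : Type :=
  { p : (T -> T) * (T -> T) | (forall a, fst p (snd p a) = a) /\ (forall a, snd p (fst p a) = a) }.

Lemma Bij_ext {T} (p q : Bij T) : fst (proj1_sig p) = fst (proj1_sig q) -> p = q.
Proof.
  destruct p as [[f g] [fg gf]], q as [[f' g'] [f'g' g'f']]; simpl in *. intros <-.
  apply sig_ext; simpl. f_equal. extensionality b.
  rewrite <- (fg b) at 2. now rewrite g'f'.
Qed.

Definition Bij_mul {T} (p q : Bij T) : Bij T.
Proof.
  refine (exist _ (fun a => fst (proj1_sig p) (fst (proj1_sig q) a),
                   fun a => snd (proj1_sig q) (snd (proj1_sig p) a)) _).
  destruct p as [[f g] [fg gf]], q as [[f' g'] [f'g' g'f']]; simpl.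
  split; intro a; [now rewrite f'g', fg | now rewrite gf, g'f'].
Defined.

Definition Bij_one T : Bij T :=
  exist _ (fun a => a, fun a => a) (conj (fun a => eq_refl) (fun a => eq_refl)).

Definition Bij_inv {T} (p : Bij T) : Bij T :=
  exist _ (snd (proj1_sig p), fst (proj1_sig p))
    (conj (proj2 (proj2_sig p)) (proj1 (proj2_sig p))).

Lemma Bij_group T : is_group (@Bij_mul T) (Bij_one T) (@Bij_inv T).
Proof.
  split; [|split; [|split; [|split]]]; intros; apply Bij_ext; simpl; try reflexivity;
    destruct a as [[f g] [fg gf]]; extensionality b; simpl; auto.
Qed.

Section Embedding.
Variables (X : Type) (r : X -> X -> X * X).
Hypothesis r_nondeg : nondegenerate r.
Hypothesis r_invol : involutive r.
Hypothesis r_braided : braided r.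

Lemma lact_inj x a b : lact r x a = lact r x b -> a = b.
Proof. apply (proj1 (proj1 (r_nondeg x))). Qed.

Definition lact_inv (x w : X) : X :=
  proj1_sig (constructive_indefinite_description _ (proj2 (proj1 (r_nondeg x)) w)).

Lemma lact_lact_inv x w : lact r x (lact_inv x w) = w.
Proof. unfold lact_inv. now destruct (constructive_indefinite_description _ _). Qed.

Lemma lact_inv_lact x w : lact_inv x (lact r x w) = w.
Proof. apply (lact_inj x). apply lact_lact_inv. Qed.

Lemma lact_lact x y v : lact r x (lact r y v) = lact r (lact r x y) (lact r (ract r x y) v).
Proof.
  pose proof (r_braided (x, y, v)) as YB. unfold r12, r23 in YB. unfold lact, ract.
  destruct (r x y) as [z t]; simpl. destruct (r t v) as [p q]. destruct (r z p) as [p1 q1] eqn:Ezp.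
  destruct (r y v) as [a b]. destruct (r x a) as [a1 b1] eqn:Exa. destruct (r b1 b) as [a2 b2].
  injection YB. intros. simpl. now rewrite Exa, Ezp.
Qed.

Lemma lact_ract x y : lact r (lact r x y) (ract r x y) = x.
Proof. unfold lact, ract. now rewrite r_invol. Qed.

Definition indicator (x w : X) : Z := if excluded_middle_informative (w = x) then 1%Z else 0%Z.

Lemma indicator_lact_inv x y w : indicator y (lact_inv x w) = indicator (lact r x y) w.
Proof.
  unfold indicator.
  destruct (excluded_middle_informative (lact_inv x w = y)) as [Hy|ne1],
    (excluded_middle_informative (w = lact r x y)) as [Hw|ne2]; try reflexivity.
  - subst y. now rewrite lact_lact_inv in ne2.
  - subst w. now rewrite lact_inv_lact in ne1.
Qed.

(* x acts on Z-valued functions on X by a |-> 1_x + a o (^x -)^-1; the defining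
   relations of G(X,r) hold by the braid relation, and 1_x recovers x. *)
Definition affine (x : X) : Bij (X -> Z).
Proof.
  refine (exist _ (fun a w => (indicator x w + a (lact_inv x w))%Z,
                   fun b w => (b (lact r x w) - indicator x (lact r x w))%Z) _).
  simpl; split; intro a; extensionality w.
  - rewrite lact_lact_inv. lia.
  - rewrite lact_inv_lact. lia.
Defined.

Lemma affine_rel x y :
  Bij_mul (affine x) (affine y) = Bij_mul (affine (fst (r x y))) (affine (snd (r x y))).
Proof.
  apply Bij_ext; simpl. extensionality a. extensionality w.
  change (fst (r x y)) with (lact r x y). change (snd (r x y)) with (ract r x y).
  rewrite !indicator_lact_inv, lact_ract.
  replace (lact_inv y (lact_inv x w)) with (lact_inv (ract r x y) (lact_inv (lact r x y) w)).
  { lia. }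
  apply (lact_inj y), (lact_inj x).
  now rewrite !lact_lact_inv, lact_lact, !lact_lact_inv.
Qed.

Lemma affine_inj x y : affine x = affine y -> x = y.
Proof.
  intro Hxy. apply (f_equal (fun p => fst (proj1_sig p) (fun _ => 0%Z) x)) in Hxy.
  simpl in Hxy. unfold indicator in Hxy.
  destruct (excluded_middle_informative (x = x)) as [_|]; [|congruence].
  destruct (excluded_middle_informative (x = y)); [assumption | lia].
Qed.

Lemma structure_group_inj (G : Type) (mul : G -> G -> G) (one : G) (inv : G -> G)
  (iota : X -> G) :
  is_structure_group r mul one inv iota -> forall x y, iota x = iota y -> x = y.
Proof.
  intros [_ [_ univ]] x y Hxy.
  destruct (univ _ _ _ _ (Bij_group (X -> Z)) affine affine_rel) as [phi [_ [phi_iota _]]].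
  apply affine_inj. now rewrite <- !phi_iota, Hxy.
Qed.
End Embedding.

Section SymmetricGroup.
Variables (G : Type) (mul : G -> G -> G) (one : G) (inv : G -> G)
  (sigma : G -> G -> G * G).
Hypothesis G_group : is_group mul one inv.
Hypothesis G_sym : symmetric_group_braiding mul one sigma.

Definition lam (u v : G) : G := fst (sigma u v).
Definition rho (u v : G) : G := snd (sigma u v).

Lemma mulA a b c : mul a (mul b c) = mul (mul a b) c.
Proof. destruct G_group as (H & _); apply H. Qed.
Lemma mul1g a : mul one a = a.
Proof. destruct G_group as (_ & H & _); apply H. Qed.
Lemma mulg1 a : mul a one = a.
Proof. destruct G_group as (_ & _ & H & _); apply H. Qed.
Lemma mulVg a : mul (inv a) a = one.
Proof. destruct G_group as (_ & _ & _ & H & _); apply H. Qed.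
Lemma mulgV a : mul a (inv a) = one.
Proof. destruct G_group as (_ & _ & _ & _ & H); apply H. Qed.

Lemma mulgI a b c : mul a b = mul a c -> b = c.
Proof. intro H. now rewrite <- (mul1g b), <- (mul1g c), <- (mulVg a), <- !mulA, H. Qed.
Lemma mulKg a b : mul (inv a) (mul a b) = b.
Proof. now rewrite mulA, mulVg, mul1g. Qed.
Lemma mulKVg a b : mul a (mul (inv a) b) = b.
Proof. now rewrite mulA, mulgV, mul1g. Qed.
Lemma invg1 : inv one = one.
Proof. rewrite <- (mul1g (inv one)). apply mulgV. Qed.
Lemma invMg a b : inv (mul a b) = mul (inv b) (inv a).
Proof.
  apply (mulgI (mul a b)). rewrite mulgV, <- mulA, (mulA b), mulgV, mul1g.
  now rewrite mulgV.
Qed.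

Lemma lamMl a b u : lam (mul a b) u = lam a (lam b u).
Proof. destruct G_sym as (_ & _ & _ & _ & _ & H & _); apply H. Qed.
Lemma lam1g u : lam one u = u.
Proof. destruct G_sym as (_ & _ & H & _); apply H. Qed.
Lemma lamg1 a : lam a one = one.
Proof. destruct G_sym as (_ & H & _); apply H. Qed.
Lemma lamMr a u v : lam a (mul u v) = mul (lam a u) (lam (rho a u) v).
Proof. destruct G_sym as (_ & _ & _ & _ & _ & _ & _ & H & _); apply H. Qed.
Lemma mul_lam_rho u v : mul u v = mul (lam u v) (rho u v).
Proof. destruct G_sym as (_ & _ & _ & _ & _ & _ & _ & _ & _ & H); apply H. Qed.
Lemma lam_lam_rho u v : lam (lam u v) (rho u v) = u.
Proof. destruct G_sym as (H & _). unfold lam, rho. now rewrite (H u v). Qed.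

Lemma lamK a u : lam (inv a) (lam a u) = u.
Proof. now rewrite <- lamMl, mulVg, lam1g. Qed.
Lemma lamKV a u : lam a (lam (inv a) u) = u.
Proof. now rewrite <- lamMl, mulgV, lam1g. Qed.

Definition add (u v : G) : G := mul u (lam (inv u) v).
Definition neg (u : G) : G := lam u (inv u).

Lemma mul_add u v : mul u v = add u (lam u v).
Proof. unfold add. now rewrite lamK. Qed.
Lemma add0r v : add one v = v.
Proof. unfold add. now rewrite invg1, lam1g, mul1g. Qed.
Lemma addr0 u : add u one = u.
Proof. unfold add. now rewrite lamg1, mulg1. Qed.

Lemma addrC u v : add u v = add v u.
Proof.
  unfold add. set (w := lam (inv u) v).
  assert (uw : lam u w = v) by apply lamKV.
  rewrite mul_lam_rho, uw. f_equal.
  rewrite <- (lamK v (rho u w)). f_equal.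
  rewrite <- uw at 1. apply lam_lam_rho.
Qed.

Lemma lam_add a u v : lam a (add u v) = add (lam a u) (lam a v).
Proof.
  unfold add. rewrite lamMr, <- !lamMl. do 2 f_equal.
  assert (rho_au : rho a u = mul (inv (lam a u)) (mul a u))
    by now rewrite (mul_lam_rho a u), mulKg.
  now rewrite rho_au, <- !mulA, mulgV, mulg1.
Qed.

Lemma addrA u v w : add u (add v w) = add (add u v) w.
Proof.
  unfold add at 1. rewrite lam_add.
  change (add u v) with (mul u (lam (inv u) v)). unfold add.
  now rewrite invMg, lamMl, mulA.
Qed.

Lemma addrN u : add u (neg u) = one.
Proof. unfold add, neg. now rewrite lamK, mulgV. Qed.
Lemma addKr u x : add (neg u) (add u x) = x.
Proof. now rewrite addrA, (addrC (neg u)), addrN, add0r. Qed.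
Lemma addNKr u x : add u (add (neg u) x) = x.
Proof. now rewrite addrA, addrN, add0r. Qed.
Lemma addrI w v v' : add w v = add w v' -> v = v'.
Proof. intro H. now rewrite <- (addKr w v), H, addKr. Qed.

Lemma lam_neg a u : lam a (neg u) = neg (lam a u).
Proof. apply (addrI (lam a u)). now rewrite <- lam_add, !addrN, lamg1. Qed.
Lemma negD u v : neg (add u v) = add (neg u) (neg v).
Proof.
  apply (addrI (add u v)).
  now rewrite addrN, (addrC (neg u)), addrA, <- (addrA u v), addrN, addr0, addrN.
Qed.
Lemma neg1 : neg one = one.
Proof. apply (addrI one). now rewrite addrN, add0r. Qed.

Record congruence (E : G -> G -> Prop) : Prop := {
  cong_equiv : Equivalence E;
  cong_add : Proper (E ==> E ==> E) add;
  cong_lam : Proper (E ==> E ==> E) lam }.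
Arguments cong_equiv {E}.
Arguments cong_add {E}.
Arguments cong_lam {E}.

Lemma congruence_eq : congruence eq.
Proof. split; [exact eq_equivalence | congruence ..]. Qed.

Definition same_lam (E : G -> G -> Prop) (u v : G) : Prop := forall w, E (lam u w) (lam v w).
Definition trivial_lam (E : G -> G -> Prop) (a : G) : Prop := forall w, E (lam a w) w.

Section Congruence.
Variable E : G -> G -> Prop.
Hypothesis E_cong : congruence E.
#[local] Instance E_equivalence : Equivalence E := cong_equiv E_cong.
#[local] Instance add_E_proper : Proper (E ==> E ==> E) add := cong_add E_cong.
#[local] Instance lam_E_proper : Proper (E ==> E ==> E) lam := cong_lam E_cong.

Lemma cong_neg : Proper (E ==> E) neg.
Proof.
  intros u u' H. rewrite <- (addr0 (neg u)), <- (addrN u'), <- H at 1.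
  now rewrite addKr.
Qed.

Lemma same_lam_iff_trivial u v : same_lam E u v <-> trivial_lam E (mul (inv u) v).
Proof.
  split; intros H w.
  - now rewrite lamMl, <- (H w), lamK.
  - now rewrite <- (mulKVg u v), lamMl, (H w).
Qed.

Lemma trivial_lam_mul a b : trivial_lam E a -> trivial_lam E b -> trivial_lam E (mul a b).
Proof. intros Ha Hb w. now rewrite lamMl, (Hb w), (Ha w). Qed.

Lemma trivial_lam_conj a b : trivial_lam E a -> trivial_lam E (mul (mul b a) (inv b)).
Proof. intros Ha w. now rewrite !lamMl, (Ha (lam (inv b) w)), lamKV. Qed.

Lemma trivial_lam_resp a a' : E a a' -> trivial_lam E a -> trivial_lam E a'.
Proof. intros Haa' Ha w. now rewrite <- Haa'. Qed.

(* [b a b^-1 = b + lam b a + lam b (lam a b^-1)] and [lam a b^-1 ~ b^-1], so the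
   conjugate is congruent to [lam b a]. *)
Lemma trivial_lam_lam a b : trivial_lam E a -> trivial_lam E (lam b a).
Proof.
  intro Ha. apply (trivial_lam_resp (mul (mul b a) (inv b))); [|now apply trivial_lam_conj].
  rewrite (mul_add (mul b a)), lamMl, (mul_add b a), (Ha (inv b)).
  change (lam b (inv b)) with (neg b).
  now rewrite <- addrA, (addrC (lam b a)), addNKr.
Qed.

Lemma trivial_lam_add a c : trivial_lam E a -> trivial_lam E c -> trivial_lam E (add a c).
Proof. intros Ha Hc. apply trivial_lam_mul; [exact Ha | now apply trivial_lam_lam]. Qed.

Lemma same_lam_iff_trivial_add u v : same_lam E u v <-> trivial_lam E (add (neg u) v).
Proof.
  rewrite same_lam_iff_trivial. split; intro H.
  - rewrite <- (mulKVg u v), (mul_add u), addKr. now apply trivial_lam_lam.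
  - rewrite <- (addNKr u v). unfold add at 1. rewrite mulKg. now apply trivial_lam_lam.
Qed.

Lemma congruence_same_lam : congruence (same_lam E).
Proof.
  split.
  - split.
    + intros x w. reflexivity.
    + intros x y H w. symmetry. apply H.
    + intros x y z H1 H2 w. now rewrite (H1 w).
  - intros u u' Hu v v' Hv. apply same_lam_iff_trivial_add.
    apply same_lam_iff_trivial_add in Hu, Hv.
    replace (add (neg (add u v)) (add u' v')) with (add (add (neg u) u') (add (neg v) v'))
      by (rewrite negD, <- !addrA; f_equal; rewrite !addrA; f_equal; apply addrC).
    now apply trivial_lam_add.
  - intros u u' Hu v v' Hv w. rewrite <- (Hu v'). revert w.
    apply same_lam_iff_trivial. apply same_lam_iff_trivial in Hv.
    rewrite <- (mulKVg v v'), lamMr, mulKg. now apply trivial_lam_lam.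
Qed.
End Congruence.

Fixpoint ret_rel (k : nat) : G -> G -> Prop :=
  match k with O => eq | S k => same_lam (ret_rel k) end.

Lemma congruence_ret_rel k : congruence (ret_rel k).
Proof. induction k; [apply congruence_eq | now apply congruence_same_lam]. Qed.

#[local] Instance ret_rel_equivalence k : Equivalence (ret_rel k) :=
  cong_equiv (congruence_ret_rel k).

#[local] Instance lam_ret_rel_proper k : Proper (ret_rel k ==> ret_rel k ==> ret_rel k) lam :=
  cong_lam (congruence_ret_rel k).
#[local] Instance add_ret_rel_proper k : Proper (ret_rel k ==> ret_rel k ==> ret_rel k) add :=
  cong_add (congruence_ret_rel k).
#[local] Instance neg_ret_rel_proper k : Proper (ret_rel k ==> ret_rel k) neg :=
  cong_neg (ret_rel k) (congruence_ret_rel k).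

Lemma ret_rel_succ k u v : ret_rel k u v -> ret_rel (S k) u v.
Proof. intros H w. now rewrite H. Qed.

Definition ret_total (k : nat) : Prop := forall u v, ret_rel k u v.

Lemma has_mpl_G m : has_mpl (mkSS sigma) m <-> least ret_total m.
Proof.
  apply (has_mpl_iff (mkSS sigma) ret_rel).
  - apply ret_rel_equivalence.
  - reflexivity.
  - reflexivity.
  - intros k x x' z z' Hx Hz. now apply (cong_lam (congruence_ret_rel k)).
  - exact one.
Qed.

Variables (X : Type) (r : X -> X -> X * X) (iota : X -> G) (L : G -> X -> X).
Hypothesis X_symset : symmetric_set r.
Hypothesis G_struct : is_structure_group r mul one inv iota.
Hypothesis sigma_ext : extends_braiding r iota sigma.
Hypothesis L_spec : is_L r mul one iota L.

Lemma group_ind (P : G -> Prop) : P one -> (forall x, P (iota x)) ->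
  (forall u v, P u -> P v -> P (mul u v)) -> (forall u, P u -> P (inv u)) -> forall g, P g.
Proof.
  intros P1 Piota Pmul Pinv.
  destruct G_struct as [_ [iota_rel univ]].
  pose (mulP := fun a b : sig P =>
    exist P (mul (proj1_sig a) (proj1_sig b)) (Pmul _ _ (proj2_sig a) (proj2_sig b))).
  pose (invP := fun a : sig P => exist P (inv (proj1_sig a)) (Pinv _ (proj2_sig a))).
  assert (subgroup : is_group mulP (exist P one P1) invP).
  { split; [|split; [|split; [|split]]]; intros; apply sig_ext; simpl.
    - apply mulA.
    - apply mul1g.
    - apply mulg1.
    - apply mulVg.
    - apply mulgV. }
  destruct (univ _ _ _ _ subgroup (fun x => exist P (iota x) (Piota x)))
    as [phi [phi_hom [phi_iota _]]].
  { intros x y. apply sig_ext, iota_rel. }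
  destruct (univ _ _ _ _ G_group iota iota_rel) as [psi [_ [_ psi_unique]]].
  (* both the identity and [proj1_sig o phi] extend [iota] *)
  intro g. replace g with (proj1_sig (phi g)); [apply proj2_sig|].
  rewrite (psi_unique (fun g => proj1_sig (phi g))), (psi_unique (fun g => g)); try easy.
  - intros a b. now rewrite phi_hom.
  - intro x. now rewrite phi_iota.
Qed.

Lemma L_iota x y : L (iota x) y = lact r x y.
Proof. destruct L_spec as (H & _); apply H. Qed.
Lemma L_mul g h y : L (mul g h) y = L g (L h y).
Proof. destruct L_spec as (_ & H & _); apply H. Qed.
Lemma L_one y : L one y = y.
Proof. destruct L_spec as (_ & _ & H); apply H. Qed.

Lemma lam_iota_iota x y : lam (iota x) (iota y) = iota (lact r x y).
Proof. unfold lam. now rewrite sigma_ext. Qed.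

Lemma lam_iota u y : lam u (iota y) = iota (L u y).
Proof.
  revert y. apply (group_ind (fun u => forall y, lam u (iota y) = iota (L u y))).
  - intro y. now rewrite lam1g, L_one.
  - intros x y. now rewrite lam_iota_iota, L_iota.
  - intros a b Ha Hb y. now rewrite lamMl, Hb, Ha, L_mul.
  - intros a Ha y.
    replace y with (L a (L (inv a) y)) at 1 by now rewrite <- L_mul, mulgV, L_one.
    rewrite <- Ha. apply lamK.
Qed.

Lemma iota_inj x y : iota x = iota y -> x = y.
Proof.
  destruct X_symset as (_ & nd & r_invol & r_braided).
  now apply (structure_group_inj X r nd r_invol r_braided G mul one inv iota).
Qed.

(* G is generated by iota(X) under the brace operations too: multiplication and
   inversion are recovered as u v = u + lam u v and u^-1 = lam u^-1 (neg u). *)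
Lemma brace_ind (P : G -> Prop) : P one -> (forall x, P (iota x)) ->
  (forall a b, P a -> P b -> P (add a b)) -> (forall a, P a -> P (neg a)) -> forall g, P g.
Proof.
  pose (Q := fun g => forall R : G -> Prop, R one -> (forall x, R (iota x)) ->
     (forall a b, R a -> R b -> R (add a b)) -> (forall a, R a -> R (neg a)) -> R g).
  assert (Q_lam : forall a b, Q a -> Q (lam b a)).
  { intros a b Qa R R1 Riota Radd Rneg.
    apply (Qa (fun c => R (lam b c))).
    - now rewrite lamg1.
    - intro x. rewrite lam_iota. apply Riota.
    - intros c d Rc Rd. rewrite lam_add. now apply Radd.
    - intros c Rc. rewrite lam_neg. now apply Rneg. }
  assert (Q_all : forall g, Q g).
  { apply group_ind.
    - now intros R R1 _ _ _.
    - intros x R _ Riota _ _. apply Riota.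
    - intros u v Qu Qv R R1 Riota Radd Rneg. rewrite mul_add.
      apply Radd; [now apply (Qu R) | now apply (Q_lam v u Qv R)].
    - intros u Qu. rewrite <- (lamK u (inv u)). fold (neg u). apply Q_lam.
      intros R R1 Riota Radd Rneg. apply Rneg. now apply (Qu R). }
  intros P1 Piota Padd Pneg g. now apply (Q_all g P).
Qed.

Lemma same_lam_iff_gen E : congruence E ->
  forall u v, same_lam E u v <-> forall z, E (iota (L u z)) (iota (L v z)).
Proof.
  intros E_cong u v. pose proof (cong_equiv E_cong) as E_equiv. split.
  - intros H z. rewrite <- !lam_iota. apply H.
  - intro H. unfold same_lam. apply (brace_ind (fun w => E (lam u w) (lam v w))).
    + now rewrite !lamg1.
    + intro x. rewrite !lam_iota. apply H.
    + intros a b Ha Hb. rewrite !lam_add. now apply (cong_add E_cong).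
    + intros a Ha. rewrite !lam_neg. now apply cong_neg.
Qed.

Lemma ret_rel_1_iff u v : ret_rel 1 u v <-> forall z, L u z = L v z.
Proof.
  change (ret_rel 1 u v) with (same_lam eq u v). rewrite (same_lam_iff_gen eq congruence_eq).
  split; intros H z; [apply iota_inj, H | now rewrite H].
Qed.

Definition ret_total_X (k : nat) : Prop := forall x y, ret_rel k (iota x) (iota y).

Lemma has_mpl_X m : has_mpl (mkSS r) m <-> least ret_total_X m.
Proof.
  destruct X_symset as [[x0 _] _].
  apply (has_mpl_iff (mkSS r) (fun k x y => ret_rel k (iota x) (iota y))).
  - intro k. split.
    + intro x. reflexivity.
    + intros x y H. now symmetry.
    + intros x y z H1 H2. now transitivity (iota y).
  - intros x y. split; [apply iota_inj | now intros ->].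
  - intros k x y. simpl. rewrite (same_lam_iff_gen (ret_rel k) (congruence_ret_rel k)).
    now setoid_rewrite L_iota.
  - intros k x x' z z' Hx Hz.
    change (ret_rel k (iota (lact r x z)) (iota (lact r x' z'))).
    rewrite <- !lam_iota_iota. now apply (cong_lam (congruence_ret_rel k)).
  - exact x0.
Qed.

Lemma prep_spec (c : PermCar L) : proj1_sig c = L (prep c).
Proof. unfold prep. now destruct (constructive_indefinite_description _ _). Qed.

Lemma ret_rel_prep_Lelt k g : ret_rel (S k) (prep (Lelt L g)) g.
Proof.
  induction k as [|k IH].
  - apply ret_rel_1_iff. intro z. now rewrite <- prep_spec.
  - now apply ret_rel_succ.
Qed.

Lemma has_mpl_Perm m : has_mpl (PermSS L sigma) m <-> least (fun k => ret_total (S k)) m.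
Proof.
  pose proof ret_rel_prep_Lelt as RL.
  transitivity (least (fun k => forall c d : PermCar L, ret_rel (S k) (prep c) (prep d)) m).
  2:{ apply least_iff. intro k. split; [|intros H c d; apply H].
      intros H u v. rewrite <- (RL k u), <- (RL k v). apply H. }
  apply (has_mpl_iff (PermSS L sigma) (fun k c d => ret_rel (S k) (prep c) (prep d))).
  - intro k. split.
    + intro c. reflexivity.
    + intros c d H. now symmetry.
    + intros c d e H1 H2. now transitivity (prep d).
  - intros c d. rewrite ret_rel_1_iff. split.
    + intro H. apply sig_ext. rewrite !prep_spec. extensionality z. apply H.
    + now intros ->.
  - intros k c d. cbv beta. cbn [rmap PermSS fst snd]. split.
    + intros H e. now rewrite (RL _ (lam (prep c) (prep e))), (RL _ (lam (prep d) (prep e))).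
    + intros H w. specialize (H (Lelt L w)).
      now rewrite (RL _ (lam (prep c) (prep (Lelt L w)))),
        (RL _ (lam (prep d) (prep (Lelt L w)))), (RL k w) in H.
  - intros k c c' e e' Hc He. cbv beta. cbn [rmap PermSS fst snd].
    now rewrite (RL _ (lam (prep c) (prep e))), (RL _ (lam (prep c') (prep e'))), Hc, He.
  - exact (Lelt L one).
Qed.

Lemma ret_total_X_of_ret_total k : ret_total k -> ret_total_X k.
Proof. intros H x y. apply H. Qed.

Lemma ret_total_of_gens k : (forall x, ret_rel k (iota x) one) -> ret_total k.
Proof.
  intro gens.
  assert (all_one : forall g, ret_rel k g one).
  { apply brace_ind.
    - reflexivity.
    - exact gens.
    - intros a b Ha Hb. now rewrite Ha, Hb, add0r.
    - intros a Ha. now rewrite Ha, neg1. }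
  intros u v. now rewrite (all_one u), (all_one v).
Qed.

Lemma ret_rel_succ_iff k u v :
  ret_rel (S k) u v <-> forall z, ret_rel k (iota (L u z)) (iota (L v z)).
Proof. apply same_lam_iff_gen, congruence_ret_rel. Qed.

Lemma ret_total_succ_of_X k : ret_total_X k -> ret_total (S k).
Proof.
  intro H. apply ret_total_of_gens. intro x. apply ret_rel_succ_iff. intro z.
  rewrite L_iota, L_one. apply H.
Qed.

Lemma ret_total_of_X_star k : cond_star r -> ret_total_X (S k) -> ret_total (S k).
Proof.
  intros star H. apply ret_total_of_gens. intro x. apply ret_rel_succ_iff. intro z.
  destruct (star z) as [a Ha].
  pose proof (proj1 (ret_rel_succ_iff k _ _) (H x a) z) as Hxa.
  rewrite !L_iota, Ha in Hxa. now rewrite L_iota, L_one.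
Qed.

Lemma not_ret_total_X0 : (exists x y : X, x <> y) -> ~ ret_total_X 0.
Proof. intros [x [y xy]] H. apply xy, iota_inj, H. Qed.

Lemma finite_mpl_G_iff_X : finite_mpl (mkSS sigma) <-> finite_mpl (mkSS r).
Proof.
  unfold finite_mpl. setoid_rewrite has_mpl_G. setoid_rewrite has_mpl_X. split.
  - intros [m [Hm _]]. apply (least_exists _ m). now apply ret_total_X_of_ret_total.
  - intros [k [Hk _]]. apply (least_exists _ (S k)). now apply ret_total_succ_of_X.
Qed.

Lemma mpl_Perm_of_G (two : exists x y : X, x <> y) m :
  has_mpl (mkSS sigma) m -> 1 <= m /\ has_mpl (PermSS L sigma) (m - 1).
Proof.
  rewrite has_mpl_G, has_mpl_Perm. intro Hm.
  assert (not0 : ~ ret_total 0).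
  { intro H. now apply (not_ret_total_X0 two), ret_total_X_of_ret_total. }
  destruct m as [|m]; [now destruct (not0 (proj1 Hm))|].
  split; [lia|]. simpl. rewrite Nat.sub_0_r. now apply least_succ.
Qed.

Lemma mpl_X_of_G m : has_mpl (mkSS sigma) m ->
  exists k, has_mpl (mkSS r) k /\ m - 1 <= k /\ k <= m.
Proof.
  rewrite has_mpl_G. intro Hm.
  destruct (least_exists ret_total_X m) as [k Hk]; [now apply ret_total_X_of_ret_total, Hm|].
  exists k. split; [now apply has_mpl_X|]. split.
  - pose proof (least_le Hm (ret_total_succ_of_X k (proj1 Hk))). lia.
  - apply (least_le Hk). now apply ret_total_X_of_ret_total, Hm.
Qed.

Lemma mpl_X_iff_G_star (two : exists x y : X, x <> y) : cond_star r ->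
  forall m, has_mpl (mkSS r) m <-> has_mpl (mkSS sigma) m.
Proof.
  intros star m. rewrite has_mpl_X, has_mpl_G. apply least_iff. intros [|k]; split.
  - intro H. now destruct (not_ret_total_X0 two H).
  - intro H. now destruct (not_ret_total_X0 two (ret_total_X_of_ret_total 0 H)).
  - now apply ret_total_of_X_star.
  - apply ret_total_X_of_ret_total.
Qed.
End SymmetricGroup.

Lemma square_free_cond_star X (r : X -> X -> X * X) : square_free r -> cond_star r.
Proof. intros sf x. exists x. unfold lact. now rewrite sf. Qed.

Theorem mainTheorem9 (X : Type) (r : X -> X -> X * X)
  (G : Type) (mul : G -> G -> G) (one : G) (inv : G -> G) (iota : X -> G)
  (sigma : G -> G -> G * G) (L : G -> X -> X) :
  symmetric_set r ->
  (exists x y : X, x <> y) ->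
  is_structure_group r mul one inv iota ->
  symmetric_group_braiding mul one sigma ->
  extends_braiding r iota sigma ->
  is_L r mul one iota L ->
  (* (1) *)
  ((finite_mpl (@mkSS G sigma) <-> finite_mpl (@mkSS X r)) /\
   (forall m, has_mpl (@mkSS G sigma) m ->
      1 <= m /\ has_mpl (PermSS L sigma) (m - 1) /\
      exists k, has_mpl (@mkSS X r) k /\ m - 1 <= k /\ k <= m)) /\
  (* (2) *)
  (cond_star r -> forall m, has_mpl (@mkSS X r) m <-> has_mpl (@mkSS G sigma) m) /\
  (square_free r -> forall m, has_mpl (@mkSS X r) m <-> has_mpl (@mkSS G sigma) m).
Proof.
  intros X_symset two G_struct G_sym sigma_ext L_spec.
  pose proof (proj1 G_struct) as G_group.
  assert (mpl_star : cond_star r -> forall m, has_mpl (mkSS r) m <-> has_mpl (mkSS sigma) m)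
    by (eapply mpl_X_iff_G_star; eassumption).
  split; [split|split].
  - eapply finite_mpl_G_iff_X; eassumption.
  - intros m Hm.
    assert (Perm : 1 <= m /\ has_mpl (PermSS L sigma) (m - 1))
      by (eapply mpl_Perm_of_G; eassumption).
    assert (between : exists k, has_mpl (mkSS r) k /\ m - 1 <= k /\ k <= m)
      by (eapply mpl_X_of_G; eassumption).
    tauto.
  - exact mpl_star.
  - intro sf. now apply mpl_star, square_free_cond_star.
Qed.
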